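(* Let $p$ be a prime, $q$ a power of $p$, and $F$ a field of characteristic $p$ containing $\mathbb{F}_q$. Let $L\in F[x]$ be a monic $q$-polynomial of $q$-degree $n\ge1$ whose coefficient of $x$ equals $(-1)^n$, let $E$ be its splitting field over $F$, and let $G=\mathrm{Gal}(E/F)$, regarded as a subgroup of $GL(n,q)$ via its linear action on the $\mathbb{F}_q$-space of roots of $L$. Then $\det\sigma=1$ for all $\sigma\in G$; thus $G$ is a subgroup of $SL(n,q)$.
   Context: A $q$-polynomial over $F$ is a polynomial $\sum_{i=0}^n a_i x^{q^i}\in F[x]$; with $a_n\ne0$ its $q$-degree is $n$. When the coefficient of $x$ is nonzero, the roots of $L$ in $E$ are distinct and form an $n$-dimensional $\mathbb{F}_q$-vector space on which $G$ acts $\mathbb{F}_q$-linearly. *)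

From HB Require Import structures.
From mathcomp Require Import all_boot all_order all_algebra all_fingroup all_field.
Set Implicit Arguments. Unset Strict Implicit. Unset Printing Implicit Defensive.
Import GRing.Theory.
Local Open Scope ring_scope.

Definition is_qpoly (F : fieldType) (q : nat) (L : {poly F}) : Prop :=
  forall j : nat, L`_j != 0 -> exists i : nat, j = (q ^ i)%N.

Definition qdeg_is (F : fieldType) (q n : nat) (L : {poly F}) : Prop :=
  size L = (q ^ n).+1.

From HB Require Import structures.
From mathcomp Require Import all_boot all_order all_algebra all_fingroup all_field.

(* Let b be an F_q-basis of the roots of L and B = (b_i^(q^j)) its Moore
   matrix. B is invertible: otherwise a nonzero q-polynomial of degree at most
   q^(n-1) would vanish on the q^n roots of L. Raising B to the q-th power
   shifts its columns, and L(b_i) = 0 rewrites the new last column, so that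
   det(B)^q = (-1)^n L_1 det B = det B. Hence det B lies in F_q and is fixed
   by every sigma in G, while sigma(B) = M^T B; thus det M = 1. *)

Set Implicit Arguments.
Unset Strict Implicit.
Unset Printing Implicit Defensive.
Import GRing.Theory.
Local Open Scope ring_scope.

Section PcharPower.
Variables (R : comNzRingType) (m : nat).

Definition pchar_power of [pchar R].-nat m := fun x : R => x ^+ m.

Variable chm : [pchar R].-nat m.

Lemma pchar_powerE x : pchar_power chm x = x ^+ m.
Proof. by []. Qed.

Lemma pchar_power_is_nmod_morphism : nmod_morphism (pchar_power chm).
Proof.
split=> [|x y]; last exact: exprDn_pchar.
by case/andP: chm; rewrite /pchar_power expr0n lt0n => /negbTE ->.
Qed.

Lemma pchar_power_is_monoid_morphism : monoid_morphism (pchar_power chm).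
Proof. by split=> [|x y]; rewrite /pchar_power ?expr1n ?exprMn. Qed.

HB.instance Definition _ := GRing.isNmodMorphism.Build R R (pchar_power chm)
  pchar_power_is_nmod_morphism.
HB.instance Definition _ := GRing.isMonoidMorphism.Build R R (pchar_power chm)
  pchar_power_is_monoid_morphism.

End PcharPower.

Section QPoly.
Variables (R : nzRingType) (q : nat).

Definition qpoly m (a : 'I_m -> R) : {poly R} := \sum_(i < m) a i *: 'X^(q ^ i).

Lemma coef_qpoly m (a : 'I_m -> R) j :
  (qpoly a)`_j = \sum_(i < m | j == (q ^ i)%N) a i.
Proof.
rewrite coef_sum [RHS]big_mkcond; apply: eq_bigr => i _.
by rewrite coefZ coefXn; case: eqP; rewrite ?mulr1 ?mulr0.
Qed.

Lemma coef_qpoly_exp m (a : 'I_m -> R) (j : 'I_m) :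
  (1 < q)%N -> (qpoly a)`_(q ^ j) = a j.
Proof.
move=> q_gt1; rewrite coef_qpoly (big_pred1 j) // => i.
by rewrite /= eqn_exp2l // eq_sym.
Qed.

Lemma size_qpoly n (a : 'I_n.+1 -> R) :
  (0 < q)%N -> (size (qpoly a) <= (q ^ n).+1)%N.
Proof.
move=> q_gt0; apply: leq_trans (size_sum _ _ _) _; apply/bigmax_leqP => i _.
apply: leq_trans (size_scale_leq _ _) _.
by rewrite size_polyXn ltnS leq_pexp2l // -ltnS.
Qed.

Lemma horner_qpoly m (a : 'I_m -> R) x :
  (qpoly a).[x] = \sum_(i < m) a i * x ^+ (q ^ i).
Proof.
by rewrite horner_sum; apply: eq_bigr => i _; rewrite hornerZ hornerXn.
Qed.

End QPoly.

Lemma qpoly_expansion (F : fieldType) q n (L : {poly F}) :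
  (1 < q)%N -> is_qpoly q L -> qdeg_is q n L ->
  L = qpoly q (fun i : 'I_n.+1 => L`_(q ^ i)).
Proof.
move=> q_gt1 qpL degL; apply/polyP => j; rewrite coef_qpoly.
have [Lj0|Lj_neq0] := eqVneq L`_j 0.
  by rewrite Lj0 big1 // => i /eqP <-.
have [i ji] := qpL j Lj_neq0.
have i_le_n : (i < n.+1)%N.
  have : (j < size L)%N.
    by rewrite ltnNge; apply: contra Lj_neq0 => /leq_sizeP ->.
  by rewrite degL ji ltnS leq_exp2l.
rewrite ji (big_pred1 (Ordinal i_le_n)) // => i' /=.
by rewrite eqn_exp2l // eq_sym.
Qed.

Lemma root_map_qpoly (F : fieldType) (R : comNzRingType)
    (g : {rmorphism F -> R}) q n (L : {poly F}) x :
  (1 < q)%N -> is_qpoly q L -> qdeg_is q n L -> root (map_poly g L) x ->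
  \sum_(i < n.+1) g L`_(q ^ i) * x ^+ (q ^ i) = 0.
Proof.
move=> q_gt1 qpL degL /eqP root_x; rewrite -[RHS]root_x.
rewrite {2}(qpoly_expansion q_gt1 qpL degL) rmorph_sum horner_sum.
by apply: eq_bigr => i _; rewrite /= map_polyZ map_polyXn hornerZ hornerXn.
Qed.

Lemma root_map_monic_qpoly (F : fieldType) (R : comNzRingType)
    (g : {rmorphism F -> R}) q n (L : {poly F}) x :
  (1 < q)%N -> is_qpoly q L -> qdeg_is q n.+1 L -> L \is monic ->
  root (map_poly g L) x ->
  x ^+ (q ^ n.+1) + \sum_(i < n.+1) g L`_(q ^ i) * x ^+ (q ^ i) = 0.
Proof.
move=> q_gt1 qpL degL /monicP lead_L root_x.
have lead_coef_L : L`_(q ^ n.+1) = 1 by rewrite -lead_L /lead_coef degL.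
rewrite addrC -[RHS](root_map_qpoly q_gt1 qpL degL root_x) [RHS]big_ord_recr /=.
by rewrite lead_coef_L rmorph1 mul1r.
Qed.

Lemma det_col_rot (R : comNzRingType) n (A B : 'M[R]_n.+1) :
  col' ord_max A = col' ord0 B -> col ord_max A = col ord0 B ->
  \det A = (-1) ^+ n * \det B.
Proof.
move=> eq_minor eq_col.
rewrite (expand_det_col A ord_max) (expand_det_col B ord0) mulr_sumr.
apply: eq_bigr => i _.
have := congr1 (fun C : 'cV[R]_n.+1 => C i ord0) eq_col; rewrite !mxE => ->.
rewrite /cofactor eq_minor /= addn0 exprD !mulrA; congr (_ * _).
by rewrite mulrC mulrA.
Qed.

Section MooreMatrix.
Variables (E : fieldType) (q : nat).
Hypothesis chq : [pchar E].-nat q.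

Definition moore_mx n (b : 'I_n -> E) : 'M[E]_n :=
  \matrix_(i, j) b i ^+ (q ^ j).

Lemma det_moore_mx_expq n (b l : 'I_n.+1 -> E) :
  (forall i, b i ^+ (q ^ n.+1) + \sum_j l j * b i ^+ (q ^ j) = 0) ->
  \det (moore_mx b) ^+ q = (-1) ^+ n.+1 * l ord0 * \det (moore_mx b).
Proof.
move=> root_b; set B := moore_mx b.
(* B *m T is B with its first column replaced by (b i ^+ (q ^ n.+1))_i,
   i.e. the Moore matrix raised to the q-th power with columns rotated. *)
pose T : 'M[E]_n.+1 := \matrix_(i, j) if j == ord0 then - l i else (i == j)%:R.
have det_T : \det T = - l ord0.
  rewrite det_trig; last first.
    apply/is_trig_mxP => i j lt_ij; rewrite mxE ifN; last first.
      by rewrite -val_eqE /= -lt0n (leq_ltn_trans _ lt_ij).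
    by rewrite -val_eqE /= ltn_eqF.
  by rewrite big_ord_recl big1 ?mulr1 => [|i _]; rewrite mxE ?eqxx.
have expq_mx i j : b i ^+ (q ^ j) ^+ q = b i ^+ (q ^ j.+1).
  by rewrite -exprM -expnSr.
have := @det_col_rot _ _ (map_mx (pchar_power chq) B) (B *m T).
rewrite det_map_mx det_mulmx det_T /= pchar_powerE => -> //.
- by rewrite exprS mulN1r !mulNr !mulrN (mulrC (\det B)) mulrA.
- apply/matrixP => i j; rewrite !mxE lift_max pchar_powerE expq_mx.
  rewrite (bigD1 (lift ord0 j)) //= big1 ?addr0 => [|m m_neq]; rewrite !mxE /=.
    by rewrite eqxx mulr1 /bump leq0n.
  by rewrite (negbTE m_neq) mulr0.
- apply/matrixP => i j; rewrite !ord1 !mxE pchar_powerE expq_mx /=.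
  move/eqP: (root_b i); rewrite addr_eq0 => /eqP ->.
  rewrite -sumrN; apply: eq_bigr => m _.
  by rewrite !mxE eqxx mulrN mulrC.
Qed.

End MooreMatrix.

Section FiniteScalars.
Variables (K : finFieldType) (E : fieldType) (f : {rmorphism K -> E}).
Local Notation q := #|K|.

Lemma rmorph_expf_cardX c j : f c ^+ (q ^ j) = f c.
Proof.
rewrite -rmorphXn; congr (f _).
by elim: j => [|j IHj]; rewrite ?expr1 // expnSr exprM IHj expf_card.
Qed.

Lemma expf_card_fixed_image x : x ^+ q = x -> exists c, x = f c.
Proof.
move=> x_fixed; have : root (map_poly f ('X^q - 'X)) x.
  by rewrite rmorphB /= map_polyXn map_polyX rootE !hornerE x_fixed subrr.
rewrite finField_genPoly rmorph_prod (eq_bigr (fun c => 'X - (f c)%:P)).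
  rewrite -big_enum /= -(big_map f xpredT (fun a => 'X - a%:P)) root_prod_XsubC.
  by case/imageP => c _ ->; exists c.
by move=> c _; rewrite rmorphB /= map_polyX map_polyC.
Qed.

Hypothesis chK : [pchar E].-nat q.

Lemma span_expf_cardX n (b : 'I_n -> E) (c : 'I_n -> K) j :
  (\sum_i f (c i) * b i) ^+ (q ^ j) = \sum_i f (c i) * b i ^+ (q ^ j).
Proof.
have chKj : [pchar E].-nat (q ^ j)%N by rewrite pnatX chK.
rewrite -(pchar_powerE chKj) rmorph_sum; apply: eq_bigr => i _.
by rewrite rmorphM /= !pchar_powerE rmorph_expf_cardX.
Qed.

Lemma det_moore_mx_neq0 n (b : 'I_n -> E) :
    (forall c : 'I_n -> K, \sum_i f (c i) * b i = 0 -> forall i, c i = 0) ->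
  \det (moore_mx q b) != 0.
Proof.
case: n b => [|n] b free_b; first by rewrite det_mx00 oner_neq0.
rewrite -det_tr; apply/negP => /det0P[v v_neq0 vB0].
pose P := qpoly q (fun j => v 0 j).
have q_gt1 : (1 < q)%N := finNzRing_gt1 K.
have P_neq0 : P != 0.
  apply: contraNneq v_neq0 => P0; apply/eqP/rowP => j.
  by rewrite mxE -(coef_qpoly_exp _ j q_gt1) -/P P0 coef0.
have P_root_b i : P.[b i] = 0.
  have := congr1 (fun w : 'rV[E]_n.+1 => w 0 i) vB0; rewrite !mxE => vBi.
  by rewrite -[RHS]vBi horner_qpoly; apply: eq_bigr => j _; rewrite !mxE.
pose span (c : {ffun 'I_n.+1 -> K}) := \sum_i f (c i) * b i.
have P_root_span c : root P (span c).
  rewrite rootE horner_qpoly.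
  under eq_bigr do rewrite span_expf_cardX mulr_sumr.
  rewrite exchange_big big1 // => i _ /=.
  transitivity (f (c i) * P.[b i]); last by rewrite P_root_b mulr0.
  by rewrite horner_qpoly mulr_sumr; apply: eq_bigr => j _; rewrite mulrCA.
have span_inj : injective span.
  move=> c c' /eqP; rewrite -subr_eq0 -sumrB => /eqP span0.
  apply/ffunP => i; apply/eqP; rewrite -subr_eq0; apply/eqP.
  apply: (free_b (fun i => c i - c' i)); rewrite -[RHS]span0.
  by apply: eq_bigr => j _; rewrite rmorphB mulrBl.
have := max_poly_roots P_neq0 (rs := map span (enum {ffun 'I_n.+1 -> K})).
rewrite map_inj_uniq ?enum_uniq // size_map -cardE card_ffun card_ord.
have -> : all (root P) (map span (enum {ffun 'I_n.+1 -> K})).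
  by apply/allP => x /mapP[c _ ->].
move=> /(_ isT isT) /leq_trans/(_ (size_qpoly _ (ltnW q_gt1))).
by rewrite ltnS leq_exp2l // ltnn.
Qed.

Lemma map_moore_mx n (s : {rmorphism E -> E}) (b : 'I_n -> E) (M : 'M[K]_n) :
    (forall j, s (b j) = \sum_i f (M i j) * b i) ->
  map_mx s (moore_mx q b) = (map_mx f M)^T *m moore_mx q b.
Proof.
move=> s_b; apply/matrixP => i j; rewrite !mxE rmorphXn s_b span_expf_cardX.
by apply: eq_bigr => m _; rewrite !mxE.
Qed.

End FiniteScalars.

Theorem corollary2p4
  (p k : nat) (F : fieldType) (K : finFieldType) (iota : {rmorphism K -> F})
  (E : splittingFieldType F) (L : {poly F}) (n : nat) :
  prime p -> p \in [pchar F] -> (0 < k)%N ->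
  #|K| = (p ^ k)%N ->
  is_qpoly (p ^ k) L -> qdeg_is (p ^ k) n L -> L \is monic -> (1 <= n)%N ->
  L`_1 = (-1) ^+ n ->
  splittingFieldFor 1%VS (map_poly (in_alg E) L) fullv ->
  forall b : 'I_n -> E,
    (forall i, root (map_poly (in_alg E) L) (b i)) ->
    (forall c : 'I_n -> K,
        \sum_i (iota (c i))%:A * b i = 0 -> forall i, c i = 0) ->
    (forall x : E, root (map_poly (in_alg E) L) x ->
        exists c : 'I_n -> K, x = \sum_i (iota (c i))%:A * b i) ->
  forall sigma, sigma \in ('Gal(fullv / 1%VS))%g ->
  forall M : 'M[K]_n,
    (forall j, sigma (b j) = \sum_i (iota (M i j))%:A * b i) ->
    \det M = 1.
Proof.
case: n => [//|n] pr_p chF _ cardK qpL degL monL _ L1 _ b root_b free_b _.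
move=> sigma sigma_gal M sigma_b.
pose f : {rmorphism K -> E} := in_alg E \o iota.
have chK : [pchar E].-nat #|K|.
  have chE : p \in [pchar E] by rewrite pchar_lalg.
  by rewrite cardK (eq_pnat _ (pcharf_eq chE)) pnatX pnat_id.
rewrite -cardK in qpL degL; set B := moore_mx #|K| b.
have detB_neq0 : \det B != 0 := det_moore_mx_neq0 (f := f) chK free_b.
have detB_fixed : \det B ^+ #|K| = \det B.
  have root_rel i :=
    root_map_monic_qpoly (finNzRing_gt1 K) qpL degL monL (root_b i).
  rewrite (det_moore_mx_expq chK root_rel) /= expn0 L1 -in_algE rmorph_sign.
  by rewrite -exprMn mulrNN mulr1 expr1n mul1r.
have [c detB_f] := expf_card_fixed_image f detB_fixed.
have sigma_detB : sigma (\det B) = \det B.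
  by apply: (fixed_gal (sub1v _) sigma_gal); rewrite detB_f /= rpredZ ?mem1v.
have := congr1 determinant (map_moore_mx (f := f) chK sigma_b).
rewrite det_map_mx det_mulmx det_tr det_map_mx /= -/B sigma_detB => detB_eq.
apply: (@fmorph_inj _ _ f); apply: (mulIf detB_neq0).
by rewrite rmorph1 mul1r -detB_eq.
Qed.
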